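(* Let $n,k\geq 1$ and let ${\bf m}=(m_1,\dots,m_k)$ be an array of nonnegative integers. For every permutation $\tau\in\mathfrak{S}_{k-1}$ there exists a bijection $\mathfrak{a}\mapsto\mathfrak{b}$ from $\mathcal{A}_n^k({\bf m})$ onto $\mathcal{A}_n^k({\bf m}')$, where ${\bf m}'=(m_{\tau(1)},\dots,m_{\tau(k-1)},m_k)$, such that $\mathrm{DES}(\mathfrak{a})=\mathrm{DES}(\mathfrak{b})$, $\mathrm{DEZ}(\mathfrak{a})=\mathrm{DEZ}(\mathfrak{b})$ and $\mathrm{Der}(\mathfrak{a})=\mathrm{Der}(\mathfrak{b})$.
   Context: $\mathfrak{S}_n$ is the set of permutations of $[n]=\{1,\dots,n\}$; $\mathrm{FIX}(\pi)=\{i:\pi(i)=i\}$. For $k\ge1$, a $k$-arrangement of $[n]$ is a pair $\mathfrak{a}=(\pi,\phi)$ with $\pi\in\mathfrak{S}_n$ and $\phi:\mathrm{FIX}(\pi)\to\{-1,\dots,-k\}$ arbitrary; $\mathcal{A}_n^k$ is the set of them. The positive reduction of an integer word replaces every occurrence of its $i$-th smallest positive letter by $i$, for all $i$ (negative letters unchanged). The derangement form $\mathrm{df}_k(\mathfrak{a})$ is obtained from $\pi(1)\cdots\pi(n)$ by replacing $\pi(i)$ with $\phi(i)$ for each $i\in\mathrm{FIX}(\pi)$ and then applying positive reduction; the permutation form $\mathrm{pf}_k(\mathfrak{a})$ is obtained likewise, replacing only for those $i\in\mathrm{FIX}(\pi)$ with $\phi(i)\neq-k$. For an integer word $w=w_1\cdots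 w_n$, $\mathrm{DES}(w)=\{i\in[n-1]:w_i>w_{i+1}\}$, and $\mathrm{Pos}(w)$ is the subword of positive letters. $\mathrm{DES}(\mathfrak{a})=\mathrm{DES}(\mathrm{pf}_k(\mathfrak{a}))$, $\mathrm{DEZ}(\mathfrak{a})=\mathrm{DES}(\mathrm{df}_k(\mathfrak{a}))$, $\mathrm{Der}(\mathfrak{a})=\mathrm{Pos}(\mathrm{df}_k(\mathfrak{a}))$, $\mathrm{fix}_i(\mathfrak{a})=|\{j\in\mathrm{FIX}(\pi):\phi(j)=-i\}|$, and $\mathcal{A}_n^k({\bf m})=\{\mathfrak{a}\in\mathcal{A}_n^k:\mathrm{fix}_i(\mathfrak{a})=m_i,\ 1\le i\le k\}$. *)

From mathcomp Require Import all_boot all_order all_algebra all_fingroup.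
From mathcomp Require Import ssrint.
Set Implicit Arguments. Unset Strict Implicit. Unset Printing Implicit Defensive.
Import Order.TTheory GRing.Theory Num.Theory.

(* [n] is encoded by 'I_n (value i stands for i+1); the label -(j+1) for
   j : 'I_k stands for the negative letter -1,...,-k. *)

(* Raw pairs (pi, phi): phi i = Some j means phi(i) = -(j+1); phi i = None
   means i is not in FIX(pi). *)
Definition arr (n k : nat) := ({perm 'I_n} * {ffun 'I_n -> option 'I_k})%type.

Definition Arr (n k : nat) : {set arr n k} :=
  [set a : arr n k | [forall i, (a.1 i == i) == (a.2 i != None)]].

Definition fixc (n k : nat) (a : arr n k) (j : 'I_k) : nat :=
  #|[set i | a.2 i == Some j]|.

Definition Arr_m (n k : nat) (m : 'I_k -> nat) : {set arr n k} :=
  [set a in Arr n k | [forall j, fixc a j == m j]].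

Definition pos_red (w : seq int) : seq int :=
  [seq (if (0 < x)%R
        then Posz (size [seq y <- undup w | (0 < y)%R && (y <= x)%R])
        else x) | x <- w].

(* word pi(1)...pi(n) with pi(i) replaced by phi(i) for fixed i with
   rep (phi i) true, before positive reduction *)
Definition raw_word (n k : nat) (rep : 'I_k -> bool) (a : arr n k) : seq int :=
  [seq (match a.2 i with
        | Some j => if rep j then (- Posz j.+1)%R else Posz (a.1 i).+1
        | None => Posz (a.1 i).+1
        end) | i <- enum 'I_n].

Definition df (n k : nat) (a : arr n k) : seq int :=
  pos_red (raw_word (fun _ => true) a).

Definition pf (n k : nat) (a : arr n k) : seq int :=
  pos_red (raw_word (fun j : 'I_k => j.+1 != k) a).

(* DES(w) = {i in [n-1] : w_i > w_{i+1}} (1-indexed positions) *)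
Definition DESw (w : seq int) : seq nat :=
  [seq i <- iota 1 (size w).-1 | (nth 0%R w i < nth 0%R w i.-1)%R].

Definition Posw (w : seq int) : seq int := [seq x <- w | (0 < x)%R].

Definition DES (n k : nat) (a : arr n k) := DESw (pf a).
Definition DEZ (n k : nat) (a : arr n k) := DESw (df a).
Definition Der (n k : nat) (a : arr n k) := Posw (df a).

(* m' = (m_{tau(1)}, ..., m_{tau(k-1)}, m_k) *)
Definition perm_arr (k : nat) (tau : {perm 'I_k.-1}) (m : 'I_k -> nat)
  : 'I_k -> nat :=
  fun i => match (insub (val i) : option 'I_k.-1) with
           | Some j => m (widen_ord (leq_pred k) (tau j))
           | None => m i
           end.

From mathcomp Require Import all_boot all_order all_algebra all_fingroup ssrint.
From mathcomp Require Import zify.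
From Stdlib Require Import FunctionalExtensionality.
Set Implicit Arguments. Unset Strict Implicit. Unset Printing Implicit Defensive.
Import Order.TTheory GRing.Theory Num.Theory.

(* Permutations of the colours 1, ..., k-1 are generated by adjacent
   transpositions and the required bijections compose, so it suffices to
   exchange two colours i and i+1 < k.  The letters -i and -(i+1) are
   consecutive integers, so no other letter, and no positive letter after
   reduction, can tell them apart in a comparison.  Between two adjacent fixed
   points coloured i or i+1 there is a descent exactly at a factor
   (-i, -(i+1)).  Keep these factors; every maximal run of the remaining
   consecutive positions coloured i or i+1 reads (-(i+1))^p (-i)^q, and
   replace it by (-(i+1))^q (-i)^p, i.e. reverse it and exchange the colours.
   This involution keeps pi and all descents, and exchanges fix_i and
   fix_(i+1). *)

Lemma perm_adjacent_ind m (P : {perm 'I_m} -> Prop) :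
  P 1%g -> (forall s t, P s -> P t -> P (s * t)%g) ->
  (forall x y : 'I_m, val y = (val x).+1 -> P (tperm x y)) ->
  forall s, P s.
Proof.
move=> P1 PM Padj.
have Ptperm x y : P (tperm x y).
  wlog lt_xy : x y / (x < y)%N.
    move=> H; case: (ltngtP x y) => [|lt_yx|/val_inj ->]; first exact: H.
      by rewrite tpermC; apply: H.
    by rewrite tperm1.
  have [d yE] : exists d, y = x + d.+1 :> nat by exists (y - x).-1; lia.
  elim: d y yE {lt_xy} => [|d IH] y yE; first by apply: Padj; rewrite /= yE addn1.
  have lt_z : (x + d.+1 < m)%N by have := ltn_ord y; lia.
  pose z := Ordinal lt_z.
  have ne_xz : x != z by apply/eqP => /(congr1 val) /=; lia.
  have ne_xy : x != y by apply/eqP => /(congr1 val) /=; lia.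
  have -> : tperm x y = (tperm z y * tperm x z * tperm z y)%g.
    have := tpermJ x z (tperm z y); rewrite tpermL tpermD 1?eq_sym //.
    by rewrite /conjg tpermV mulgA => <-.
  have Pzy : P (tperm z y) by apply: Padj; rewrite /= yE addnS.
  by apply: (PM) => //; apply: (PM) => //; apply: IH.
move=> s; have [ts -> _] := prod_tpermP s.
elim: ts => [|t ts IH]; first by rewrite big_nil.
by rewrite big_cons; apply: PM.
Qed.

Section Runs.
Variables (n l : nat) (w : nat -> nat).

Definition marked i := (i < n) && ((w i == l) || (w i == l.+1)).
Definition linked i := [&& i.+1 < n, w i == l & w i.+1 == l.+1].
Definition bound i := linked i || (0 < i) && linked i.-1.
Definition loose i := marked i && ~~ bound i.

Fixpoint run_start i := if i is j.+1 then (if loose j then run_start j else i) else 0.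

Fixpoint run_end_within f i :=
  if f is f'.+1 then (if loose i.+1 then run_end_within f' i.+1 else i) else i.

Definition run_end i := run_end_within n i.

Definition mirror i := if loose i then run_start i + run_end i - i else i.

Definition swap_adj c := if c == l then l.+1 else if c == l.+1 then l else c.

Definition flip_runs i := if loose i then swap_adj (w (mirror i)) else w i.

Lemma loose_lt i : loose i -> i < n.
Proof. by case/andP=> /andP[]. Qed.

Lemma loose_letter i : loose i -> (w i == l) || (w i == l.+1).
Proof. by case/andP=> /andP[]. Qed.

Lemma marked_bound i : marked i -> ~~ loose i -> bound i.
Proof. by rewrite /loose => ->; rewrite negbK. Qed.

Lemma linked_nloose i : linked i -> ~~ loose i /\ ~~ loose i.+1.
Proof. by move=> lk; rewrite /loose /bound /= lk orbT !andbF. Qed.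

Lemma run_start_le i : run_start i <= i.
Proof. by elim: i => //= i IH; case: (loose i) => //; lia. Qed.

Lemma loose_run_start i t : run_start i <= t < i -> loose t.
Proof.
elim: i => [|i IH] /=; first lia.
case: ifP => lo; last lia.
by move=> Ht; have [->|ne] := eqVneq t i; last apply: IH; lia.
Qed.

Lemma run_start_stop i : 0 < run_start i -> ~~ loose (run_start i).-1.
Proof. by elim: i => //= i IH; case: ifP => [_ //|lo _]; rewrite /= lo. Qed.

Lemma run_startE i j : j <= i -> (forall t, j <= t < i -> loose t) ->
  j = 0 \/ ~~ loose j.-1 -> run_start i = j.
Proof.
elim: i j => [|i IH] j /=; first by case: j.
move=> le_ji looseP stop.
have [ej|ne] := eqVneq j i.+1; first by subst j; case: stop => [//|/= /negbTE ->].
rewrite looseP; last lia.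
by apply: IH => //; [lia | move=> t Ht; apply: looseP; lia].
Qed.

Lemma run_end_within_ge f i : i <= run_end_within f i.
Proof. elim: f i => //= f IH i; case: ifP => // _; have := IH i.+1; lia. Qed.

Lemma loose_run_end_within f i t : i < t <= run_end_within f i -> loose t.
Proof.
elim: f i => /= [|f IH] i; first lia.
case: ifP => lo; last lia.
by move=> Ht; have [->|ne] := eqVneq t i.+1; last apply: (IH i.+1); lia.
Qed.

Lemma run_end_within_stop f i : n - i <= f -> ~~ loose (run_end_within f i).+1.
Proof.
elim: f i => /= [|f IH] i le_f; first by apply/negP => /loose_lt; lia.
by case: ifP => lo; [apply: IH; lia | rewrite lo].
Qed.

Lemma run_end_withinE f i j : j - i <= f -> i <= j ->
  (forall t, i < t <= j -> loose t) -> ~~ loose j.+1 -> run_end_within f i = j.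
Proof.
elim: f i => /= [|f IH] i le_f le_ij looseP stop; first lia.
have [eij|ne] := eqVneq i j; first by rewrite eij (negbTE stop).
rewrite looseP; last lia.
by apply: IH => //; [lia | lia | move=> t Ht; apply: looseP; lia].
Qed.

Lemma run_end_ge i : i <= run_end i.
Proof. exact: run_end_within_ge. Qed.

Lemma run_loose i t : loose i -> run_start i <= t <= run_end i -> loose t.
Proof.
move=> lo Ht; case: (ltngtP t i) => [lt_ti|lt_it|-> //].
  by apply: (loose_run_start (i := i)); lia.
by apply: (loose_run_end_within (f := n) (i := i)); move: Ht; rewrite /run_end; lia.
Qed.

Lemma run_end_lt i : loose i -> run_end i < n.
Proof.
move=> lo; apply: loose_lt; apply: (run_loose lo).
by have := run_start_le i; have := run_end_ge i; lia.
Qed.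

Lemma run_start_run i t : loose i -> run_start i <= t <= run_end i ->
  run_start t = run_start i.
Proof.
move=> lo Ht; apply: run_startE; first lia.
  by move=> u Hu; apply: (run_loose lo); lia.
have [->|pos] := posnP (run_start i); [by left | right; exact: run_start_stop].
Qed.

Lemma run_end_run i t : loose i -> run_start i <= t <= run_end i ->
  run_end t = run_end i.
Proof.
move=> lo Ht; have lt_e := run_end_lt lo.
rewrite {1}/run_end; apply: run_end_withinE; try lia.
  by move=> u Hu; apply: (run_loose lo); lia.
by apply: run_end_within_stop; lia.
Qed.

Lemma loose_mirror i : loose (mirror i) = loose i.
Proof.
rewrite /mirror; case: ifP => // lo; apply: (run_loose lo).
by have := run_start_le i; have := run_end_ge i; lia.
Qed.

Lemma mirrorK : involutive mirror.
Proof.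
move=> i; have [lo|nlo] := boolP (loose i); last by rewrite /mirror !(negbTE nlo).
have lm : loose (run_start i + run_end i - i).
  by have := loose_mirror i; rewrite /mirror lo.
rewrite /mirror lo lm.
have := run_start_le i; have := run_end_ge i => ge_e le_s.
have Ht : run_start i <= run_start i + run_end i - i <= run_end i by lia.
by rewrite (run_start_run lo Ht) (run_end_run lo Ht); lia.
Qed.

Lemma mirror_lt i : i < n -> mirror i < n.
Proof.
rewrite /mirror; case: ifP => // lo.
by have := run_end_lt lo; have := run_start_le i; lia.
Qed.

Lemma mirror_succ i : loose i -> loose i.+1 -> mirror i = (mirror i.+1).+1.
Proof.
move=> lo lo1; rewrite /mirror lo lo1 /= lo.
have -> : run_end i = run_end i.+1.
  apply: (run_end_run lo1) => /=; rewrite lo.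
  by have := run_end_ge i.+1; have := run_start_le i; lia.
by have := run_end_ge i.+1; have := run_start_le i; lia.
Qed.

Lemma marked_ltn i : marked i -> marked i.+1 -> (w i < w i.+1) = linked i.
Proof.
rewrite /marked /linked => /andP[_ wi] /andP[-> wi1] /=.
by case/orP: wi => /eqP ->; case/orP: wi1 => /eqP ->; rewrite ?eqxx //=; lia.
Qed.

Lemma swap_adjK : involutive swap_adj.
Proof. by move=> c; rewrite /swap_adj; do 4?case: eqP => //=; lia. Qed.

Lemma swap_adj_l : swap_adj l = l.+1.
Proof. by rewrite /swap_adj eqxx. Qed.

Lemma swap_adj_succ : swap_adj l.+1 = l.
Proof. by rewrite /swap_adj eqxx; case: eqP => //; lia. Qed.

Lemma swap_adj_letter c :
  (swap_adj c == l) || (swap_adj c == l.+1) = (c == l) || (c == l.+1).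
Proof. by rewrite /swap_adj; do 4?case: eqP => //=; lia. Qed.

Lemma flip_runs_nloose i : ~~ loose i -> flip_runs i = w i.
Proof. by rewrite /flip_runs => /negbTE ->. Qed.

Lemma flip_runs_letter i : loose i -> (flip_runs i == l) || (flip_runs i == l.+1).
Proof.
move=> lo; have lm : loose (mirror i) by rewrite loose_mirror.
by rewrite /flip_runs lo swap_adj_letter loose_letter.
Qed.

Lemma count_mirror (P : pred nat) :
  count (fun i => loose i && P (mirror i)) (iota 0 n) =
  count (fun i => loose i && P i) (iota 0 n).
Proof.
have mirror_iota : perm_eq (map mirror (iota 0 n)) (iota 0 n).
  apply: uniq_perm; rewrite ?(map_inj_uniq (inv_inj mirrorK)) ?iota_uniq //.
  move=> i; rewrite mem_iota add0n; apply/mapP/idP => [[j]|lt_in].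
    by rewrite mem_iota => /andP[_ /mirror_lt lt_jn] ->.
  by exists (mirror i); rewrite ?mirrorK // mem_iota mirror_lt.
rewrite -(seq.permP mirror_iota) count_map; apply: eq_count => i /=.
by rewrite loose_mirror mirrorK.
Qed.

Lemma count_bound_letters :
  count (fun i => ~~ loose i && (w i == l)) (iota 0 n) =
  count (fun i => ~~ loose i && (w i == l.+1)) (iota 0 n).
Proof.
have -> : count (fun i => ~~ loose i && (w i == l)) (iota 0 n) =
          count linked (iota 0 n).
  apply: eq_in_count => i; rewrite mem_iota add0n => /= lt_in.
  rewrite /loose /marked /bound /linked lt_in /=.
  by case: i lt_in => [|i] lt_in /=; case: (w _ =P l) => //=;
    case: (w _ =P _) => //=; rewrite ?andbF ?andbT //=; lia.
have -> : count (fun i => ~~ loose i && (w i == l.+1)) (iota 0 n) =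
          count (fun i => (0 < i) && linked i.-1) (iota 0 n).
  apply: eq_in_count => i; rewrite mem_iota add0n => /= lt_in.
  rewrite /loose /marked /bound /linked lt_in /=.
  by case: i lt_in => [|i] lt_in /=; case: (w _ =P l.+1) => //=;
    try case: (w _ =P _) => //=; rewrite ?andbF ?andbT //=; lia.
have [->//|n_gt0] := posnP n.
rewrite -[in LHS](prednK n_gt0) -addn1 iotaD count_cat /= {2}/linked.
rewrite prednK // ltnn /= -[in RHS](prednK n_gt0) /=.
by rewrite (iotaDl 1 0) count_map (@eq_count _ _ linked) // addnC.
Qed.

Lemma count_flip_runs c :
  count (fun i => flip_runs i == c) (iota 0 n) =
  count (fun i => w i == swap_adj c) (iota 0 n).
Proof.
have count_split (a b : pred nat) s :
    count a s = count (fun i => b i && a i) s + count (fun i => ~~ b i && a i) s.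
  by elim: s => //= i s ->; case: (a i); case: (b i) => /=; lia.
rewrite (count_split _ loose) [RHS](count_split _ loose); congr (_ + _).
  rewrite -(count_mirror (fun i => w i == swap_adj c)).
  apply: eq_count => i; rewrite /flip_runs.
  by case: (loose i) => //=; rewrite (inv_eq swap_adjK).
rewrite (@eq_count _ _ (fun i => ~~ loose i && (w i == c))); last first.
  by move=> i /=; case: (boolP (loose i)) => //= /flip_runs_nloose ->.
rewrite /swap_adj; case: (c =P l) => [->|_]; first exact: count_bound_letters.
by case: (c =P l.+1) => [->|//]; rewrite count_bound_letters.
Qed.

End Runs.

Section FlipRuns.
Variables (n l : nat) (w : nat -> nat).
Let v := flip_runs n l w.

Lemma marked_flip_runs i : marked n l v i = marked n l w i.
Proof.
rewrite /marked /v; have [lo|nlo] := boolP (loose n l w i).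
  by rewrite (loose_lt lo) flip_runs_letter // (loose_letter lo).
by rewrite flip_runs_nloose.
Qed.

Lemma linked_flip_runs i : linked n l v i = linked n l w i.
Proof.
have [lk|nlk] := boolP (linked n l w i).
  have [nl0 nl1] := linked_nloose lk.
  by rewrite /linked /v !flip_runs_nloose.
apply/negP; rewrite /linked /v => /and3P[lt_i1 vi vi1].
have lt_i : i < n by lia.
have [lo|nlo] := boolP (loose n l w i); have [lo1|nlo1] := boolP (loose n l w i.+1).
- move: vi vi1; rewrite /flip_runs lo lo1 !(inv_eq (swap_adjK l)).
  rewrite swap_adj_l swap_adj_succ (mirror_succ lo lo1) => wj1 wj.
  have lt_j1 : (mirror n l w i.+1).+1 < n by rewrite -(mirror_succ lo lo1) mirror_lt.
  have lk : linked n l w (mirror n l w i.+1) by apply/and3P.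
  by have [] := linked_nloose lk; rewrite loose_mirror lo1.
- move: vi1; rewrite (flip_runs_nloose nlo1) => wi1.
  have : bound n l w i.+1 by apply: marked_bound nlo1; rewrite /marked lt_i1 wi1 orbT.
  by rewrite /bound /= (negbTE nlk) orbF /linked (eqP wi1); case: eqP => //=; lia.
- move: vi; rewrite (flip_runs_nloose nlo) => wi.
  have : bound n l w i by apply: marked_bound nlo; rewrite /marked lt_i wi.
  rewrite /bound (negbTE nlk) /= => /andP[i_gt0].
  by rewrite /linked prednK // (eqP wi) => /and3P[_ _ /eqP]; lia.
- move: nlk; rewrite /linked lt_i1.
  by rewrite -(flip_runs_nloose nlo) -(flip_runs_nloose nlo1) vi vi1.
Qed.

Lemma loose_flip_runs i : loose n l v i = loose n l w i.
Proof. by rewrite /loose /bound marked_flip_runs !linked_flip_runs. Qed.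

Lemma mirror_flip_runs i : mirror n l v i = mirror n l w i.
Proof.
have run_start_flip j : run_start n l v j = run_start n l w j.
  by elim: j => //= j ->; rewrite loose_flip_runs.
have run_end_flip f j : run_end_within n l v f j = run_end_within n l w f j.
  by elim: f j => //= f IH j; rewrite loose_flip_runs IH.
by rewrite /mirror /run_end loose_flip_runs run_start_flip run_end_flip.
Qed.

Lemma flip_runsK : flip_runs n l v =1 w.
Proof.
move=> i; rewrite {1}/flip_runs loose_flip_runs mirror_flip_runs.
have [lo|nlo] := boolP (loose n l w i); last by rewrite /v flip_runs_nloose.
by rewrite /v /flip_runs loose_mirror lo mirrorK swap_adjK.
Qed.

End FlipRuns.

Section PositiveReduction.
Local Open Scope ring_scope.

Definition agree_off_neg (x y : int) := (x == y) || (x < 0) && (y < 0).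

Definition reduce (s : seq int) (x : int) : int :=
  if 0 < x then Posz (size [seq y <- undup s | (0 < y) && (y <= x)]) else x.

Lemma pos_red_map (T : Type) (e : seq T) (g : T -> int) :
  pos_red (map g e) = map (reduce (map g e) \o g) e.
Proof. by rewrite /pos_red -map_comp. Qed.

Lemma reduce_nonpos s x : x <= 0 -> reduce s x = x.
Proof. by rewrite /reduce leNgt => /negbTE ->. Qed.

Lemma reduce_ge0 s x : 0 <= x -> 0 <= reduce s x.
Proof. by rewrite /reduce; case: ifP. Qed.

Lemma filter_agree_off_neg (T : Type) (e : seq T) (g1 g2 : T -> int) (P : pred int) :
  (forall o, agree_off_neg (g1 o) (g2 o)) -> (forall z, P z -> 0 < z) ->
  filter P (map g1 e) = filter P (map g2 e).
Proof.
move=> g12 P_pos; elim: e => //= o e ->.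
case/orP: (g12 o) => [/eqP -> //|/andP[neg1 neg2]].
have notP z : z < 0 -> P z = false.
  by move=> z_neg; apply/negP => /P_pos; rewrite ltNge ltW.
by rewrite !notP.
Qed.

Section AgreeOffNeg.
Variables (T : Type) (e : seq T) (g1 g2 : T -> int).
Hypothesis g12 : forall o, agree_off_neg (g1 o) (g2 o).

Lemma reduce_agree_off_neg : reduce (map g1 e) =1 reduce (map g2 e).
Proof.
move=> z; rewrite /reduce; case: ifP => // _.
by rewrite !filter_undup (filter_agree_off_neg _ g12) // => ? /andP[].
Qed.

Lemma Posw_pos_red_agree_off_neg :
  Posw (pos_red (map g1 e)) = Posw (pos_red (map g2 e)).
Proof.
rewrite !pos_red_map; apply: filter_agree_off_neg => // o /=.
rewrite -reduce_agree_off_neg.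
case/orP: (g12 o) => [/eqP -> | /andP[neg1 neg2]]; first by rewrite /agree_off_neg eqxx.
by rewrite !reduce_nonpos ?ltW // neg1 neg2 orbT.
Qed.

End AgreeOffNeg.

Lemma eq_DESw_ord n (e1 e2 : 'I_n -> int) :
  (forall o1 o2 : 'I_n, val o2 = (val o1).+1 -> (e1 o2 < e1 o1) = (e2 o2 < e2 o1)) ->
  DESw (map e1 (enum 'I_n)) = DESw (map e2 (enum 'I_n)).
Proof.
move=> e12; rewrite /DESw !size_map; apply: eq_in_filter => i.
rewrite mem_iota -enumT size_enum_ord => /andP[i_gt0 lt_in].
have lt_i : (i < n)%N by lia.
have lt_i1 : (i.-1 < n)%N by lia.
rewrite !(nth_map (Ordinal lt_i)) -?enumT ?size_enum_ord //.
by apply: e12 => /=; rewrite !nth_enum_ord //; lia.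
Qed.

Lemma ltr_opp_letters (l c1 c2 : nat) (z : int) :
  (c1 == l) || (c1 == l.+1) -> (c2 == l) || (c2 == l.+1) ->
  z != - (l.+1)%:Z -> z != - (l.+2)%:Z ->
  ((z < - (c1.+1)%:Z) = (z < - (c2.+1)%:Z)) /\
  ((- (c1.+1)%:Z < z) = (- (c2.+1)%:Z < z)).
Proof. by move=> /orP[] /eqP-> /orP[] /eqP-> /eqP z1 /eqP z2; split; lia. Qed.

End PositiveReduction.

Section AdjacentColours.
Local Open Scope ring_scope.
Variables (n k : nat) (x y : 'I_k.-1).
Hypothesis xy_adj : val y = (val x).+1.
Let l := val x.
Let wx : 'I_k := widen_ord (leq_pred k) x.
Let wy : 'I_k := widen_ord (leq_pred k) y.

(* Fixed points of colour -(j+1) get code [j], so [l] and [l+1] are the codes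
   of the two exchanged colours; all other positions, including those beyond
   [n], get code [k]. *)
Definition colour_code (a : arr n k) (i : nat) : nat :=
  if insub i is Some o then (if a.2 o is Some j then val j else k) else k.

Definition flip_colours (a : arr n k) : arr n k :=
  let c := colour_code a in
  (a.1, [ffun o : 'I_n => if loose n l c o
                   then Some (if flip_runs n l c o == l then wx else wy)
                   else a.2 o]).

Lemma adj_colours_not_last : (l.+1 < k.-1)%N.
Proof. by rewrite /l -xy_adj ltn_ord. Qed.

Lemma colour_codeE a (o : 'I_n) :
  colour_code a o = if a.2 o is Some j then val j else k.
Proof. by rewrite /colour_code valK. Qed.

Lemma colour_code_out a i : (n <= i)%N -> colour_code a i = k.
Proof. by move=> le_ni; rewrite /colour_code insubF // ltnNge le_ni. Qed.

Lemma marked_colour a (o : 'I_n) : marked n l (colour_code a) o ->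
  exists2 j, a.2 o = Some j & val j = colour_code a o.
Proof.
rewrite /marked colour_codeE => /andP[_]; case: (a.2 o) => [j|]; first by exists j.
by have := adj_colours_not_last; lia.
Qed.

Lemma colour_code_flip a : colour_code (flip_colours a) = flip_runs n l (colour_code a).
Proof.
apply: functional_extensionality => i.
have [lt_in|le_ni] := ltnP i n; last first.
  rewrite !colour_code_out // flip_runs_nloose ?colour_code_out //.
  by apply/negP => /loose_lt; lia.
rewrite -[i]/(val (Ordinal lt_in)) colour_codeE ffunE.
have [lo|nlo] := boolP (loose _ _ _ _).
  by have := flip_runs_letter lo; case: eqP => [->|_ /eqP ->] //=; rewrite xy_adj.
by rewrite flip_runs_nloose // colour_codeE.
Qed.

Lemma flip_coloursK : involutive flip_colours.
Proof.
move=> a; rewrite {1}/flip_colours colour_code_flip.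
apply: injective_projections => //=; apply/ffunP => o.
rewrite ffunE loose_flip_runs flip_runsK ffunE; case: ifP => [lo|->] //.
have [j -> code_j] := marked_colour (proj1 (andP lo)); congr Some.
apply: val_inj; have := loose_letter lo; rewrite -code_j.
by case: eqP => [->|_ /eqP ->] //=; rewrite xy_adj.
Qed.

Lemma fixc_count a j : fixc a j = count (fun i => colour_code a i == val j) (iota 0 n).
Proof.
rewrite /fixc cardsE cardE /enum_mem size_filter -val_enum_ord count_map enumT.
apply: eq_count => o /=; rewrite colour_codeE unfold_in /=.
case: (a.2 o) => [j'|] /=; first by rewrite val_eqE.
by case: eqP => // e; have := ltn_ord j; rewrite -e ltnn.
Qed.

Lemma swap_adj_tperm j : swap_adj l (val j) = val (tperm wx wy j).
Proof.
rewrite permE /= /swap_adj -!val_eqE /= -/l xy_adj.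
by case: eqP => _ /=; [rewrite xy_adj | case: eqP].
Qed.

Lemma fixc_flip a j : fixc (flip_colours a) j = fixc a (tperm wx wy j).
Proof. by rewrite !fixc_count colour_code_flip count_flip_runs swap_adj_tperm. Qed.

Lemma Arr_flip a : (flip_colours a \in Arr n k) = (a \in Arr n k).
Proof.
rewrite !inE; apply: eq_forallb => o; rewrite ffunE /=; case: ifP => // lo.
by have [j -> _] := marked_colour (proj1 (andP lo)).
Qed.

Lemma perm_arr_tperm m j : perm_arr (tperm x y) m j = m (tperm wx wy j).
Proof.
rewrite /perm_arr; case: insubP => [j' _ j'E|].
  congr m; apply: val_inj; rewrite /= !permE /= -!val_eqE /= j'E.
  by do 2 case: ifP => //=.
rewrite -ltnNge permE /= -!val_eqE /= => le_j.
have := ltn_ord x; have := ltn_ord y.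
by case: eqP => [e|_]; [|case: eqP => [e|_] //]; simpl in *; lia.
Qed.

Lemma flip_colours_Arr_m m a :
  a \in Arr_m n m -> flip_colours a \in Arr_m n (perm_arr (tperm x y) m).
Proof.
case/setIdP=> aA /forallP fixc_m; apply/setIdP; rewrite Arr_flip; split=> //.
by apply/forallP => j; rewrite fixc_flip perm_arr_tperm.
Qed.

Variable rep : 'I_k -> bool.
Hypothesis rep_not_last : forall j : 'I_k, (val j < k.-1)%N -> rep j.

Definition letter (a : arr n k) (o : 'I_n) : int :=
  match a.2 o with
  | Some j => if rep j then - (j.+1)%:Z else (a.1 o).+1%:Z
  | None => (a.1 o).+1%:Z
  end.

Lemma raw_wordE a : raw_word rep a = map (letter a) (enum 'I_n).
Proof. by []. Qed.

Lemma letter_marked a (o : 'I_n) : marked n l (colour_code a) o ->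
  letter a o = - (colour_code a o).+1%:Z.
Proof.
move=> mo; have [j aj code_j] := marked_colour mo.
rewrite /letter aj rep_not_last ?code_j //.
by move: mo; rewrite /marked -code_j => /andP[_]; have := adj_colours_not_last; lia.
Qed.

Lemma letter_flip_marked a (o : 'I_n) : marked n l (colour_code a) o ->
  letter (flip_colours a) o = - (flip_runs n l (colour_code a) o).+1%:Z.
Proof. by move=> mo; rewrite letter_marked colour_code_flip // marked_flip_runs. Qed.

Lemma letter_flip_unmarked a (o : 'I_n) : ~~ marked n l (colour_code a) o ->
  letter (flip_colours a) o = letter a o.
Proof. by move=> nmo; rewrite /letter ffunE ifF //; apply: contraNF nmo => /andP[]. Qed.

Lemma letter_unmarked a (o : 'I_n) : ~~ marked n l (colour_code a) o ->
  letter a o < 0 -> (letter a o != - (l.+1)%:Z) && (letter a o != - (l.+2)%:Z).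
Proof.
rewrite /marked colour_codeE ltn_ord /letter.
case: (a.2 o) => [j|] //; case: (rep j) => //= nmo _.
by rewrite !eqr_opp !eqz_nat !eqSS; move: nmo; case: eqP; case: eqP.
Qed.

Lemma letter_flip_agree a (o : 'I_n) :
  agree_off_neg (letter a o) (letter (flip_colours a) o).
Proof.
have [mo|nmo] := boolP (marked n l (colour_code a) o).
  by rewrite /agree_off_neg letter_marked // letter_flip_marked // !oppr_lt0 orbT.
by rewrite /agree_off_neg letter_flip_unmarked // eqxx.
Qed.

Lemma Posw_flip a :
  Posw (pos_red (raw_word rep a)) = Posw (pos_red (raw_word rep (flip_colours a))).
Proof. by rewrite !raw_wordE; apply/Posw_pos_red_agree_off_neg/letter_flip_agree. Qed.

Lemma DESw_flip a :
  DESw (pos_red (raw_word rep a)) = DESw (pos_red (raw_word rep (flip_colours a))).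
Proof.
rewrite !raw_wordE !pos_red_map; apply: eq_DESw_ord => o1 o2 adj /=.
rewrite -!(reduce_agree_off_neg _ (letter_flip_agree a)).
set c := colour_code a; set r := reduce _.
have letter_c o : marked n l c o -> (c o == l) || (c o == l.+1) by case/andP.
have letter_flip o :
    marked n l c o -> (flip_runs n l c o == l) || (flip_runs n l c o == l.+1).
  by rewrite -marked_flip_runs => /andP[].
have r_marked (o : 'I_n) : marked n l c o -> r (letter a o) = - (c o).+1%:Z.
  by move=> mo; rewrite /r letter_marked // reduce_nonpos // oppr_le0.
have r_flip_marked (o : 'I_n) :
    marked n l c o -> r (letter (flip_colours a) o) = - (flip_runs n l c o).+1%:Z.
  by move=> mo; rewrite /r letter_flip_marked // reduce_nonpos // oppr_le0.
have r_unmarked (o : 'I_n) :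
    ~~ marked n l c o -> r (letter (flip_colours a) o) = r (letter a o).
  by move=> nmo; rewrite letter_flip_unmarked.
have r_not_letter (o : 'I_n) : ~~ marked n l c o ->
    (r (letter a o) != - (l.+1)%:Z) && (r (letter a o) != - (l.+2)%:Z).
  move=> nmo; case: (ltrP (letter a o) 0) => [neg|nneg].
    by rewrite /r reduce_nonpos ?ltW // letter_unmarked.
  have := reduce_ge0 (map (letter a) (enum 'I_n)) nneg; rewrite -/r.
  by case: (r _) => // m _; apply/andP; split; apply/eqP; lia.
have [m1|nm1] := boolP (marked n l c o1); have [m2|nm2] := boolP (marked n l c o2).
- rewrite !r_marked // !r_flip_marked // !ltrN2 !ltz_nat !ltnS adj.
  rewrite adj in m2; rewrite (marked_ltn m1 m2) (@marked_ltn n l (flip_runs n l c)).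
  - by rewrite linked_flip_runs.
  - by rewrite marked_flip_runs.
  - by rewrite marked_flip_runs.
- have /andP[ne1 ne2] := r_not_letter _ nm2.
  rewrite (r_unmarked o2) // (r_marked o1) // (r_flip_marked o1) //.
  exact: (ltr_opp_letters (letter_c _ m1) (letter_flip _ m1) ne1 ne2).1.
- have /andP[ne1 ne2] := r_not_letter _ nm1.
  rewrite (r_unmarked o1) // (r_marked o2) // (r_flip_marked o2) //.
  exact: (ltr_opp_letters (letter_c _ m2) (letter_flip _ m2) ne1 ne2).2.
- by rewrite !r_unmarked.
Qed.

End AdjacentColours.

Section Transport.
Variables (n k : nat).

Definition stat_bijection (tau : {perm 'I_k.-1}) := forall m : 'I_k -> nat,
  exists f : arr n k -> arr n k,
    {in Arr_m n m &, injective f} /\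
    f @: Arr_m n m = Arr_m n (perm_arr tau m) /\
    {in Arr_m n m, forall a,
        DES a = DES (f a) /\ DEZ a = DEZ (f a) /\ Der a = Der (f a)}.

Lemma eq_Arr_m (m1 m2 : 'I_k -> nat) : m1 =1 m2 -> Arr_m n m1 = Arr_m n m2.
Proof.
move=> m12; apply/setP => a; rewrite !inE; congr andb.
by apply: eq_forallb => j; rewrite m12.
Qed.

Lemma perm_arr1 (m : 'I_k -> nat) : perm_arr 1 m =1 m.
Proof.
move=> j; rewrite /perm_arr; case: insubP => [j' _ j'E|//].
by congr m; apply: val_inj; rewrite /= perm1 j'E.
Qed.

Lemma perm_arrM (s t : {perm 'I_k.-1}) (m : 'I_k -> nat) :
  perm_arr (s * t) m =1 perm_arr s (perm_arr t m).
Proof.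
by move=> j; rewrite /perm_arr; case: insubP => [j' _ j'E|//]; rewrite /= valK permM.
Qed.

Lemma stat_bijection1 : stat_bijection 1.
Proof.
move=> m; exists id; split; first by move=> a b _ _.
by split; [rewrite imset_id (eq_Arr_m (perm_arr1 m)) | ].
Qed.

Lemma stat_bijectionM s t :
  stat_bijection s -> stat_bijection t -> stat_bijection (s * t).
Proof.
move=> bij_s bij_t m.
have [f [f_inj [f_onto f_stat]]] := bij_t m.
have [g [g_inj [g_onto g_stat]]] := bij_s (perm_arr t m).
have f_in a : a \in Arr_m n m -> f a \in Arr_m n (perm_arr t m).
  by move=> aA; rewrite -f_onto imset_f.
exists (g \o f); split.
  by move=> a b aA bA /= /g_inj; rewrite !f_in // => /(_ isT isT) /f_inj; apply.
split; first by rewrite imset_comp f_onto g_onto (eq_Arr_m (perm_arrM s t m)).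
move=> a aA; have [-> [-> ->]] := f_stat a aA.
exact: g_stat (f_in a aA).
Qed.

Lemma stat_bijection_adj (x y : 'I_k.-1) :
  val y = (val x).+1 -> stat_bijection (tperm x y).
Proof.
move=> xy_adj m; exists (flip_colours x y); split.
  by move=> a b _ _; apply: (can_inj (flip_coloursK xy_adj)).
split.
  apply/setP/subset_eqP/andP; split.
    by apply/subsetP => _ /imsetP[a aA ->]; apply: flip_colours_Arr_m.
  apply/subsetP => b bA; rewrite -(flip_coloursK xy_adj b) imset_f //.
  rewrite (eq_Arr_m (m2 := perm_arr (tperm x y) (perm_arr (tperm x y) m))).
    exact: flip_colours_Arr_m.
  by move=> j; rewrite -perm_arrM tperm2 perm_arr1.
move=> a _; rewrite /DES /DEZ /Der /pf /df.
have rep_pf (j : 'I_k) : (j < k.-1)%N -> j.+1 != k by lia.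
have rep_df (j : 'I_k) : (j < k.-1)%N -> true by [].
rewrite (DESw_flip xy_adj rep_pf) (DESw_flip xy_adj rep_df).
by rewrite (Posw_flip xy_adj rep_df).
Qed.

End Transport.

Theorem lemma2p3 (n k : nat) (m : 'I_k -> nat) (tau : {perm 'I_k.-1}) :
  0 < n -> 0 < k ->
  exists f : arr n k -> arr n k,
    {in Arr_m n m &, injective f} /\
    f @: Arr_m n m = Arr_m n (perm_arr tau m) /\
    {in Arr_m n m, forall a,
        DES a = DES (f a) /\ DEZ a = DEZ (f a) /\ Der a = Der (f a)}.
Proof.
move=> _ _; move: m; apply: (perm_adjacent_ind (P := @stat_bijection n k)) tau.
- exact: stat_bijection1.
- exact: stat_bijectionM.
- exact: stat_bijection_adj.
Qed.
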